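(* Let $(F,C,(u_f),d,k)$ be an instance of Capacitated $k$-Median, let $A\subseteq F$ with $|A|\le\ell$, and let $d_\ell$ be the $\ell$-centered metric constructed from $A$ (new centers $s^f$ for $f\in A$ at distance $0$ from $f$, a complete graph on the centers with lengths from $d$, each $v\in F\cup C$ joined by one edge of length $d(v,s^v)$ to a closest center $s^v$, and $d_\ell$ the shortest-path metric). Then for every assignment $\phi:C\to F$ (in particular for every feasible solution of the instance with metric $d_\ell$), $$\sum_{c\in C} d_\ell(c,\phi(c))\ \ge\ \sum_{c\in C} d(c,\phi(c)).$$
   Context: Capacitated $k$-Median: facilities $F$ with capacities $u_f\in\mathbb{Z}_{\ge0}$, clients $C$, a metric $d$ on $F\cup C$, an integer $k$; a solution opens at most $k$ facilities and assigns clients to open facilities respecting capacities; its cost under a metric $d'$ is $\sum_c d'(c,\phi(c))$. *)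

From HB Require Import structures.
From mathcomp Require Import all_boot all_order all_algebra.
From mathcomp Require Import boolp classical_sets reals constructive_ereal ereal.
Set Implicit Arguments. Unset Strict Implicit. Unset Printing Implicit Defensive.
Import Order.TTheory GRing.Theory Num.Theory.
Local Open Scope ring_scope.
Local Open Scope classical_set_scope.

Definition pt (F C : finType) := (F + C)%type.

Definition is_metric (R : realType) (T : Type) (d : T -> T -> R) : Prop :=
  [/\ forall x y, 0 <= d x y,
      forall x y, d x y = 0 <-> x = y,
      forall x y, d x y = d y x &
      forall x y z, d x z <= d x y + d y z].

(* The centers: one new vertex s^f for each f in A. *)
Definition center (F : finType) (A : {set F}) := {f : F | f \in A}.

Definition lvert (F C : finType) (A : {set F}) := (pt F C + center A)%type.

(* sigma v = the facility f in A whose center s^f is the chosen closest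
   center s^v of v. *)
Definition closest_choice (R : realType) (F C : finType) (d : pt F C -> pt F C -> R)
  (A : {set F}) (sigma : pt F C -> F) : Prop :=
  forall v, sigma v \in A /\ forall a, a \in A -> d v (inl (sigma v)) <= d v (inl a).

(* Edge lengths of the l-centered graph (None = no edge).  Since s^f is at
   distance 0 from f, the length d(v, s^f) is d(v, f). *)
Definition ledge (R : realType) (F C : finType) (d : pt F C -> pt F C -> R)
  (A : {set F}) (sigma : pt F C -> F) (x y : lvert C A) : option R :=
  match x, y with
  | inl v, inr s => if sval s == sigma v then Some (d v (inl (sval s))) else None
  | inr s, inl v => if sval s == sigma v then Some (d v (inl (sval s))) else None
  | inr s, inr t => if s != t then Some (d (inl (sval s)) (inl (sval t))) else None
  | inl _, inl _ => None
  end.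

Definition ladj (R : realType) (F C : finType) (d : pt F C -> pt F C -> R)
  (A : {set F}) (sigma : pt F C -> F) : rel (lvert C A) :=
  fun x y => ledge d sigma x y != None.

Definition walk_len (R : realType) (F C : finType) (d : pt F C -> pt F C -> R)
  (A : {set F}) (sigma : pt F C -> F) (x : lvert C A) (p : seq (lvert C A)) : R :=
  \sum_(e <- pairmap (fun a b => odflt 0 (ledge d sigma a b)) x p) e.

(* d_l : the shortest-path metric of the l-centered graph, restricted to
   the original points (+oo if no path exists). *)
Definition dl (R : realType) (F C : finType) (d : pt F C -> pt F C -> R)
  (A : {set F}) (sigma : pt F C -> F) (x y : pt F C) : \bar R :=
  ereal_inf [set (walk_len d sigma (inl x) p)%:E |
             p in [set p : seq (lvert C A) |
                   path (ladj d sigma) (inl x) p /\ last (inl x) p = inl y]].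

(* Identify every center s^f with its facility f.  Each edge of the
   l-centered graph is then at least as long as the d-distance between its
   (identified) endpoints: a center-center edge has exactly that length, and
   an edge v -- s^f has length d(v, f).  By the triangle inequality every walk
   is at least as long as the d-distance between its endpoints, so
   d_l >= d pointwise, whatever the set A and the choice of closest centers. *)
From HB Require Import structures.
From mathcomp Require Import all_boot all_order all_algebra.
From mathcomp Require Import boolp classical_sets reals constructive_ereal ereal.
Import Order.TTheory GRing.Theory Num.Theory.
Local Open Scope ring_scope.

Definition lproj (F C : finType) (A : {set F}) (x : lvert C A) : pt F C :=
  match x with inl v => v | inr s => inl (sval s) end.

Arguments lproj {F C A}.

Section CenteredGraph.

Variables (R : realType) (F C : finType) (d : pt F C -> pt F C -> R).
Variables (A : {set F}) (sigma : pt F C -> F).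

Hypothesis d_refl : forall x, d x x = 0.
Hypothesis d_sym : forall x y, d x y = d y x.
Hypothesis d_triangle : forall x y z, d x z <= d x y + d y z.

Lemma ledge_ge_dist (x y : lvert C A) :
  ladj d sigma x y -> d (lproj x) (lproj y) <= odflt 0 (ledge d sigma x y).
Proof.
rewrite /ladj; case: x => [v|s]; case: y => [w|t] //=; case: ifP => //= _ _.
by rewrite d_sym.
Qed.

Lemma walk_len_ge_dist (x : lvert C A) (p : seq (lvert C A)) :
  path (ladj d sigma) x p ->
  d (lproj x) (lproj (last x p)) <= walk_len d sigma x p.
Proof.
elim: p x => [|y p IHp] x /=; first by rewrite /walk_len big_nil d_refl.
move=> /andP[xy yp]; rewrite /walk_len /= big_cons.
apply: le_trans (d_triangle _ (lproj y) _) _.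
by apply: lerD; [exact: ledge_ge_dist | exact: IHp].
Qed.

Lemma dl_ge_dist (x y : pt F C) : ((d x y)%:E <= dl d A sigma x y)%E.
Proof.
apply/ereal_infP => _ [p [xp xp_y] <-]; rewrite lee_fin.
by have := walk_len_ge_dist _ _ xp; rewrite xp_y.
Qed.

End CenteredGraph.

Theorem lemma3 (R : realType) (F C : finType) (u : F -> nat)
  (d : pt F C -> pt F C -> R) (k l : nat) (A : {set F})
  (sigma : pt F C -> F) :
  is_metric d -> (#|A| <= l)%N -> closest_choice d A sigma ->
  forall phi : C -> F,
    (\sum_(c : C) dl d A sigma (inr c) (inl (phi c)) >=
     (\sum_(c : C) d (inr c) (inl (phi c)))%:E)%E.
Proof.
move=> [_ d_eq0 d_sym d_triangle] _ _ phi.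
have d_refl x : d x x = 0 by apply/d_eq0.
rewrite -sumEFin; apply: lee_sum => c _.
exact: dl_ge_dist.
Qed.
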